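(* Let $\varphi$ be a hexagonal grid. For a triangle $\mathcal{T}_i$ of the grid, listed as $(\varphi(\{p,q\}),\varphi(\{q,s\}),\varphi(\{s,p\}))$ with $p,q,s$ counterclockwise, let $a_i,b_i,c_i$ be its side lengths and $S_i$ twice its signed area (positive if the listed vertices are counterclockwise). Then the quantity $$a_i^2+b_i^2+c_i^2-2\sqrt3\,S_i$$ takes the same value for all triangles $\mathcal{T}_i$ of the grid.
   Context: Let $\zeta=e^{i\pi/3}$ and $\Lambda=\{m+n\zeta: m,n\in\mathbb{Z}\}$. Call $p,q\in\Lambda$ adjacent if $|p-q|=1$, and let $\mathcal{E}$ be the set of unordered pairs $\{p,q\}$ of adjacent lattice points. A hexagonal grid is a map $\varphi:\mathcal{E}\to\mathbb{C}$ such that for every $p\in\Lambda$ there exist $c_p,r_p\in\mathbb{C}$ with $\varphi(\{p,p+\zeta^k\})=c_p+r_p\zeta^k$ for $k=0,\dots,5$. Thus the six points form a regular, possibly degenerate, hexagon $H_p$ listed counterclockwise. For each set $\{p,q,s\}\subset\Lambda$ of three pairwise adjacent lattice points listed counterclockwise, the corresponding triangle of the grid is $(\varphi(\{p,q\}),\varphi(\{q,s\}),\varphi(\{s,p\}))$. The reference triangle of $\varphi$ is $(\varphi(\{0,1\}),\varphi(\{1,\zeta\}),\varphi(\{\zeta,0\}))$. *)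

From HB Require Import structures.
From mathcomp Require Import all_boot all_order all_algebra.
From mathcomp Require Import complex.
Set Implicit Arguments. Unset Strict Implicit. Unset Printing Implicit Defensive.
Import Order.TTheory GRing.Theory Num.Theory.
Local Open Scope ring_scope.
Local Open Scope complex_scope.

Section HexGrid.
Variable R : rcfType.

(* zeta = e^{i pi/3} = 1/2 + i sqrt 3 / 2 *)
Definition zeta : R[i] := (2%:R^-1) +i* (Num.sqrt 3%:R / 2%:R).

(* The lattice Lambda = { m + n zeta } is indexed by pairs (m, n) of integers. *)
Definition lat := (int * int)%type.
Definition emb (p : lat) : R[i] := (p.1)%:~R + (p.2)%:~R * zeta.

Definition cdist (z w : R[i]) : R :=
  let d := (z - w)%R in
  Num.sqrt ((@complex.Re R d) ^+ 2 + (@complex.Im R d) ^+ 2).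

Definition area2 (a b c : R[i]) : R :=
  let u := (b - a)%R in let v := (c - a)%R in
  @complex.Re R u * @complex.Im R v - @complex.Im R u * @complex.Re R v.

Definition adjacent (p q : lat) : Prop := cdist (emb p) (emb q) = 1.

(* lattice coordinates of zeta^k: p + zeta^k is the lattice point p + dir k *)
Definition dir (k : nat) : lat :=
  match (k %% 6)%N with
  | 0 => (1, 0) | 1 => (0, 1) | 2 => (-1, 1)
  | 3 => (-1, 0) | 4 => (0, -1) | _ => (1, -1)
  end%R.
Definition lat_add (p q : lat) : lat := (p.1 + q.1, p.2 + q.2).

(* A hexagonal grid: a map on unordered adjacent pairs, represented by a function
   on ordered pairs that is symmetric on adjacent pairs, such that around every
   lattice point the six values form a regular (possibly degenerate) hexagon. *)
Definition hex_grid (phi : lat -> lat -> R[i]) : Prop :=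
  (forall p q, adjacent p q -> phi p q = phi q p) /\
  (forall p, exists c r : R[i], forall k : 'I_6,
      phi p (lat_add p (dir k)) = c + r * zeta ^+ k).

Definition grid_triangle (p q s : lat) : Prop :=
  [/\ adjacent p q, adjacent q s, adjacent s p & 0 < area2 (emb p) (emb q) (emb s)].

Definition tri_quantity (phi : lat -> lat -> R[i]) (p q s : lat) : R :=
  let A := phi p q in let B := phi q s in let Cc := phi s p in
  cdist A B ^+ 2 + cdist B Cc ^+ 2 + cdist Cc A ^+ 2
  - 2%:R * Num.sqrt 3%:R * area2 A B Cc.

End HexGrid.

From Pilot Require Import Defs.
From mathcomp Require Import all_boot all_order all_algebra.
From mathcomp Require Import complex ring zify.
Set Implicit Arguments. Unset Strict Implicit. Unset Printing Implicit Defensive.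
Import Order.TTheory GRing.Theory Num.Theory.
Local Open Scope ring_scope.

(* By Weitzenbock's identity a^2 + b^2 + c^2 - 2 sqrt3 S = 2 |A + zeta^2 B + zeta^4 C|^2, the
   quantity is a squared norm.  Every grid triangle is p, p + zeta^k, p + zeta^(k+1) for some
   lattice point p and some k.  Expressing its vertices through the hexagons c_p + r_p zeta^j
   around p and c_w + r_w zeta^j around w = p + zeta^(k+1), the centres and the rotation
   cancel and the quantity is 2 |r_p - r_w|^2.  So the two triangles on either side of every
   edge agree; turning around each lattice point and then moving between neighbouring points
   shows that all triangles agree. *)

Definition nbr (k : nat) (p : lat) : lat := lat_add p (dir k).

Lemma dir_modn k : dir k = dir (k %% 6).
Proof. by rewrite /dir modn_mod. Qed.

(* Multiplication by zeta in lattice coordinates, as zeta^2 = zeta - 1. *)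
Definition rot60 (v : lat) : lat := (- v.2, v.1 + v.2).

Lemma dirS k : dir k.+1 = rot60 (dir k).
Proof.
rewrite (dir_modn k.+1) -addn1 -modnDml addn1 (dir_modn k).
have : (k %% 6 < 6)%N by rewrite ltn_pmod.
by case: (k %% 6)%N => [|[|[|[|[|[|n]]]]]].
Qed.

Lemma dir_addn k n : dir (k + n) = iter n rot60 (dir k).
Proof. by elim: n => [|n IHn]; rewrite ?addn0 // addnS dirS IHn. Qed.

Lemma nbr_add2 k p : nbr (k + 2) (nbr k p) = nbr k.+1 p.
Proof.
rewrite /nbr /lat_add dir_addn dirS /=.
by case: p (dir k) => [a b] [x y] /=; congr pair; ring.
Qed.

Lemma nbr_add3 k p : nbr (k + 3) (nbr k p) = p.
Proof.
rewrite /nbr /lat_add dir_addn /=.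
by case: p (dir k) => [a b] [x y] /=; congr pair; ring.
Qed.

Lemma nbr_add4 k p : nbr (k.+1 + 4) (nbr k.+1 p) = nbr k p.
Proof.
rewrite /nbr /lat_add dir_addn dirS /=.
by case: p (dir k) => [a b] [x y] /=; congr pair; ring.
Qed.

Lemma int_shift_invariant (T : Type) (g : int -> T) :
  (forall m, g (m + 1) = g m) -> forall m, g m = g 0.
Proof.
move=> gS; case=> n; elim: n => [//|n IHn].
- by rewrite -addn1 PoszD gS.
- by rewrite -(gS (- 1%:Z)) addrC subrr.
- rewrite NegzE -(gS (- n.+2%:Z)) -IHn NegzE; congr g.
  by rewrite -addn1 PoszD opprD addrNK.
Qed.

Lemma nbr_invariant (T : Type) (f : lat -> T) :
  (forall k p, f (nbr k p) = f p) -> forall p, f p = f (0, 0).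
Proof.
move=> fnbr [a b].
have row m : f (m + 1, b) = f (m, b).
  by have := fnbr 0%N (m, b); rewrite /nbr /lat_add /= addr0.
have col m : f (0, m + 1) = f (0, m).
  by have := fnbr 1%N (0, m); rewrite /nbr /lat_add /= addr0.
by rewrite (int_shift_invariant (g := fun m => f (m, b)) row a)
           (int_shift_invariant (g := fun m => f (0, m)) col b).
Qed.

Definition eisenstein_norm (a b : int) : int := a * a + a * b + b * b.

Lemma eisenstein_units_ccw (a b c d : int) :
  eisenstein_norm a b = 1 -> eisenstein_norm c d = 1 ->
  eisenstein_norm (c - a) (d - b) = 1 -> 0 < a * d - b * c ->
  exists k : nat, (a, b) = dir k /\ (c, d) = dir k.+1.
Proof.
have unit_bounds x y : eisenstein_norm x y = 1 ->
    (x = -1 \/ x = 0 \/ x = 1) /\ (y = -1 \/ y = 0 \/ y = 1).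
  by rewrite /eisenstein_norm => ?; split; nia.
move=> Nab Ncd; have Bab := unit_bounds a b Nab; have Bcd := unit_bounds c d Ncd.
move: Bab Bcd Nab Ncd => [[->|[->|->]] [->|[->|->]]] [[->|[->|->]] [->|[->|->]]];
  rewrite /eisenstein_norm /=;
  first [ by exists 0%N | by exists 1%N | by exists 2%N | by exists 3%N
        | by exists 4%N | by exists 5%N | lia ].
Qed.

Section Embedding.
Variable R : rcfType.
Local Notation sqrt3 := (Num.sqrt (3%:R : R)).
Local Notation Re := (@complex.Re R).
Local Notation Im := (@complex.Im R).
Local Notation zeta := (zeta R).
Local Notation emb := (emb R).

Lemma sqrt3_sqr : sqrt3 ^+ 2 = 3%:R.
Proof. by rewrite sqr_sqrtr // ler0n. Qed.

Lemma sqrt3_gt0 : 0 < sqrt3.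
Proof. by rewrite sqrtr_gt0 ltr0n. Qed.

Lemma ReM (x y : R[i]) : Re (x * y) = Re x * Re y - Im x * Im y.
Proof. by case: x => a b; case: y. Qed.

Lemma ImM (x y : R[i]) : Im (x * y) = Re x * Im y + Im x * Re y.
Proof. by case: x => a b; case: y. Qed.

Definition sqnormc (x : R[i]) : R := Re x ^+ 2 + Im x ^+ 2.

Lemma sqnormc_ge0 x : 0 <= sqnormc x.
Proof. by rewrite addr_ge0 // sqr_ge0. Qed.

Lemma sqnormcM x y : sqnormc (x * y) = sqnormc x * sqnormc y.
Proof. rewrite /sqnormc ReM ImM; ring. Qed.

Lemma sqnormcN x : sqnormc (- x) = sqnormc x.
Proof. by rewrite /sqnormc !raddfN /= !sqrrN. Qed.

Lemma cdist_sqr x y : cdist x y ^+ 2 = sqnormc (x - y).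
Proof. by rewrite sqr_sqrtr // sqnormc_ge0. Qed.

Lemma zeta_sqr : zeta ^+ 2 = zeta - 1.
Proof. by rewrite /Defs.zeta expr2; simpc; congr Complex; field: sqrt3_sqr. Qed.

Lemma zeta3 : zeta ^+ 3 = -1.
Proof. by rewrite exprS zeta_sqr; ring: zeta_sqr. Qed.

Lemma zeta_modn k : zeta ^+ k = zeta ^+ (k %% 6).
Proof.
have zeta6 : zeta ^+ 6 = 1 by rewrite (exprM _ 3 2) zeta3 sqrrN expr1n.
by rewrite {1}(divn_eq k 6) exprD mulnC exprM zeta6 expr1n mul1r.
Qed.

Lemma sqnormc_zetaX k : sqnormc (zeta ^+ k) = 1.
Proof.
have sqnormc_zeta : sqnormc zeta = 1 by rewrite /sqnormc /=; field: sqrt3_sqr.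
elim: k => [|k IHk]; first by rewrite /sqnormc /= expr0n addr0 expr1n.
by rewrite exprS sqnormcM IHk sqnormc_zeta mulr1.
Qed.

Lemma weitzenbock_identity (a b c : R[i]) :
  cdist a b ^+ 2 + cdist b c ^+ 2 + cdist c a ^+ 2 - 2%:R * sqrt3 * area2 a b c
  = 2%:R * sqnormc (a + zeta ^+ 2 * b + zeta ^+ 4 * c).
Proof.
have zeta4 : zeta ^+ 4 = - zeta by rewrite (exprD _ 3 1) zeta3 mulN1r.
rewrite !cdist_sqr zeta4 zeta_sqr /area2 /sqnormc !raddfD /= !(ReM, ImM) !raddfN /=.
by field: sqrt3_sqr.
Qed.

Lemma tri_quantity_rot (phi : lat -> lat -> R[i]) p q s :
  tri_quantity phi p q s = tri_quantity phi q s p.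
Proof. rewrite /tri_quantity /area2 !raddfB /=; ring. Qed.

Lemma embE (p : lat) :
  emb p = ((p.1%:~R + p.2%:~R / 2%:R) +i* (p.2%:~R * sqrt3 / 2%:R))%C.
Proof.
rewrite /Defs.emb -!(rmorph_int (real_complex R)) /Defs.zeta /real_complex_def /=.
by simpc; congr Complex; rewrite mulrA.
Qed.

Lemma emb_inj : injective emb.
Proof.
move=> [a b] [c d]; rewrite !embE => -[ac bd].
have sqrt3_half_neq0 : sqrt3 / 2%:R != 0 by rewrite gt_eqF ?divr_gt0 ?sqrt3_gt0.
have {}bd : b = d.
  by apply: (@intr_inj R); apply: (mulIf sqrt3_half_neq0); rewrite !mulrA.
by move: ac; rewrite bd => /addIr /intr_inj ->.
Qed.

Lemma emb_lat_add p q : emb (lat_add p q) = emb p + emb q.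
Proof. rewrite /Defs.emb /lat_add /= !rmorphD /=; ring. Qed.

Lemma emb_rot60 v : emb (rot60 v) = zeta * emb v.
Proof. by rewrite /Defs.emb /= rmorphN rmorphD; ring: zeta_sqr. Qed.

Lemma emb_dir k : emb (dir k) = zeta ^+ k.
Proof.
elim: k => [|k IHk]; last by rewrite dirS emb_rot60 IHk exprS.
by rewrite /Defs.emb /= rmorph1 rmorph0 mul0r addr0.
Qed.

Lemma emb_nbr k p : emb (nbr k p) = emb p + zeta ^+ k.
Proof. by rewrite emb_lat_add emb_dir. Qed.

Lemma adjacent_nbr k p : adjacent R p (nbr k p).
Proof.
rewrite /adjacent /cdist emb_nbr opprD addNKr -/(sqnormc _) sqnormcN.
by rewrite sqnormc_zetaX sqrtr1.
Qed.

Lemma adjacent_eisenstein_norm p q :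
  adjacent R p q -> eisenstein_norm (q.1 - p.1) (q.2 - p.2) = 1.
Proof.
move=> pq; have := congr1 (fun x => x ^+ 2) pq.
rewrite /= cdist_sqr expr1n /sqnormc !embE /= => e.
apply: (@intr_inj R); rewrite rmorph1 -[RHS]e /eisenstein_norm.
by rewrite !rmorphD !rmorphM !rmorphB /=; field: sqrt3_sqr.
Qed.

Lemma area2_emb p q s : area2 (emb p) (emb q) (emb s) =
  sqrt3 / 2%:R * ((q.1 - p.1) * (s.2 - p.2) - (q.2 - p.2) * (s.1 - p.1))%:~R.
Proof.
rewrite /area2 !embE /= !rmorphB !rmorphM !rmorphB /=.
by field.
Qed.

Lemma grid_triangleP p q s :
  grid_triangle R p q s -> exists k, q = nbr k p /\ s = nbr k.+1 p.
Proof.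
case=> pq qs sp; rewrite area2_emb pmulr_rgt0 ?divr_gt0 ?sqrt3_gt0 ?ltr0n // ltr0z.
move=> ccw; have Npq := adjacent_eisenstein_norm pq.
have Nps : eisenstein_norm (s.1 - p.1) (s.2 - p.2) = 1.
  by rewrite -(adjacent_eisenstein_norm sp) /eisenstein_norm; ring.
have Nqs : eisenstein_norm (s.1 - p.1 - (q.1 - p.1)) (s.2 - p.2 - (q.2 - p.2)) = 1.
  by rewrite -(adjacent_eisenstein_norm qs) /eisenstein_norm; ring.
have [k [dq ds]] := eisenstein_units_ccw Npq Nps Nqs ccw.
exists k; rewrite /nbr -dq -ds /lat_add /=.
by split; [case: q {pq qs ccw Npq Nqs dq} | case: s {qs sp ccw Nps Nqs ds}] => x y;
  congr pair; ring.
Qed.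
End Embedding.

Section HexGrid.
Variables (R : rcfType) (phi : lat -> lat -> R[i]).
Hypothesis phi_grid : hex_grid phi.
Local Notation zeta := (zeta R).

Definition hexagon_at p (c r : R[i]) := forall k, phi p (nbr k p) = c + r * zeta ^+ k.

Lemma exists_hexagon_at p : exists c r, hexagon_at p c r.
Proof.
have [_ /(_ p) [c [r Hp]]] := phi_grid; exists c, r => k.
have := Hp (Ordinal (ltn_pmod k (isT : (0 < 6)%N))).
by rewrite /= -dir_modn -zeta_modn.
Qed.

Lemma phi_sym p q : adjacent R p q -> phi p q = phi q p.
Proof. by case: phi_grid => sym _; apply: sym. Qed.

Lemma tri_quantity_radii k p c r d s :
  hexagon_at p c r -> hexagon_at (nbr k.+1 p) d s ->
  tri_quantity phi p (nbr k p) (nbr k.+1 p) = 2%:R * sqnormc (r - s).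
Proof.
move=> Hp Hw; have pw := adjacent_nbr R k.+1 p.
have qw : adjacent R (nbr k p) (nbr k.+1 p).
  by rewrite -(nbr_add2 k p); apply: adjacent_nbr.
have wp : nbr (k.+1 + 3) (nbr k.+1 p) = p := nbr_add3 k.+1 p.
have phi_wp : phi (nbr k.+1 p) p = c + r * zeta ^+ k.+1 by rewrite -phi_sym // Hp.
have phi_qw : phi (nbr k p) (nbr k.+1 p) = d + s * zeta ^+ (k.+1 + 4).
  by rewrite phi_sym // -(nbr_add4 k p) Hw.
have d_def : d = c + r * zeta ^+ k.+1 - s * zeta ^+ (k.+1 + 3).
  by rewrite -phi_wp -[X in phi _ X]wp Hw addrK.
rewrite /tri_quantity weitzenbock_identity Hp phi_qw -[X in phi _ X]wp Hw d_def.
set x := (X in sqnormc X).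
have -> : x = zeta ^+ (k + 5) * (r - s) by rewrite /x !exprD !exprS; ring: (zeta_sqr R).
by rewrite sqnormcM sqnormc_zetaX mul1r.
Qed.

Lemma tri_quantity_succ k p :
  tri_quantity phi p (nbr k p) (nbr k.+1 p) =
  tri_quantity phi p (nbr k.+1 p) (nbr k.+2 p).
Proof.
have [c [r Hp]] := exists_hexagon_at p; have [d [s Hw]] := exists_hexagon_at (nbr k.+1 p).
have Hp' : hexagon_at (nbr (k.+1 + 2).+1 (nbr k.+1 p)) c r by rewrite -addnS nbr_add3.
rewrite (tri_quantity_radii Hp Hw) -sqnormcN opprB -(tri_quantity_radii Hw Hp').
by rewrite -addnS nbr_add3 nbr_add2 [RHS]tri_quantity_rot.
Qed.

Definition vertex_quantity p := tri_quantity phi p (nbr 0 p) (nbr 1 p).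

Lemma tri_quantity_vertex k p :
  tri_quantity phi p (nbr k p) (nbr k.+1 p) = vertex_quantity p.
Proof. by elim: k => [//|k IHk]; rewrite -tri_quantity_succ. Qed.

Lemma vertex_quantity_nbr k p : vertex_quantity (nbr k p) = vertex_quantity p.
Proof.
rewrite -(tri_quantity_vertex (k + 2) (nbr k p)) -addnS nbr_add3 nbr_add2.
by rewrite -(tri_quantity_vertex k p) [RHS]tri_quantity_rot.
Qed.
End HexGrid.

Theorem mainTheorem15 (R : rcfType) (phi : lat -> lat -> R[i]) :
  hex_grid phi ->
  forall p q s p' q' s' : lat,
    grid_triangle R p q s -> grid_triangle R p' q' s' ->
    tri_quantity phi p q s = tri_quantity phi p' q' s'.
Proof.
move=> grid p q s p' q' s' /grid_triangleP [k [-> ->]] /grid_triangleP [k' [-> ->]].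
have vertex_const := nbr_invariant (vertex_quantity_nbr grid).
by rewrite !(tri_quantity_vertex grid) (vertex_const p) (vertex_const p').
Qed.
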